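(* For integers $n\ge m\ge0$ of the same parity, \[ d_{n,m}=\frac{1}{((n+m)/2)!}\,r_{(n+m)/2,(n-m)/2}, \] and $d_{n,m}=0$ when $n$ and $m$ have different parities. In particular, the number of relaxed binary trees of size $n$ equals $n!\,d_{2n,0}$.
   Context: A Dyck meander is a lattice path from $(0,0)$ with steps $U=(1,1)$, $D=(1,-1)$ never going below $y=0$; an up step starting at $(a,b)$ has weight $(a-b+2)/(a+b+2)$, a meander's weight is the product of its up-step weights, and $d_{n,m}$ is the total weight of meanders ending at $(n,m)$. A horizontally decorated path is a lattice path from $(0,0)$ with steps $H=(1,0)$, $V=(0,1)$ in the region $0\le y\le x$, each $H$ step decorated by a number in $\{1,\dots,k+1\}$ where $k$ is its $y$-coordinate; $r_{a,b}$ is the number of horizontally decorated paths ending at $(a,b)$. A relaxed binary tree of size $n$ is obtained from a rooted plane binary tree with $n$ internal nodes (its spine) by keeping the left-most leaf and turning every other leaf $\ell$ into a pointer to a vertex (an internal node or the left-most leaf) preceding $\ell$ in postorder (left subtree, right subtree, root); two relaxed trees are equal iff they have the same spine and the same pointer targets. *)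

From mathcomp Require Import all_boot all_order all_algebra.
From Stdlib Require List.
Unset Strict Implicit. Unset Printing Implicit Defensive.
Import GRing.Theory Num.Theory.

(** * Dyck meanders.  A step sequence is a [seq bool], [true] = U = (1,1),
    [false] = D = (1,-1).  The i-th step starts at (i, mh s i). *)

Definition mh (s : seq bool) (i : nat) : int :=
  (\sum_(j < i) (if nth false s j then 1 else -1))%R.

Definition is_meander (s : seq bool) : bool :=
  [forall i : 'I_(size s).+1, (0 <= mh s i)%R].

Definition up_weight (a : nat) (b : int) : rat :=
  (((a%:Z - b + 2)%:~R) / ((a%:Z + b + 2)%:~R))%R.

Definition mweight (s : seq bool) : rat :=
  (\prod_(i < size s | nth false s i) up_weight i (mh s i))%R.

Definition dnm (n m : nat) : rat :=
  (\sum_(s : n.-tuple bool | is_meander s && (mh s n == m%:Z)) mweight s)%R.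

(** A path ending at (a,b) has a+b steps;
    a step is [Some d] (an H step decorated by the number d+1, d : 'I_(b+1))
    or [None] (a V step).  Decorations of H steps at height k must lie in
    {1,...,k+1}, i.e. d <= k; since k <= b along the path, 'I_(b+1) suffices. *)

Definition hx {T} (s : seq (option T)) (i : nat) : nat :=
  count (fun o => if o is Some _ then true else false) (take i s).
Definition hy {T} (s : seq (option T)) (i : nat) : nat :=
  count (fun o => if o is Some _ then false else true) (take i s).

Definition is_hdpath (a b : nat) (s : seq (option 'I_b.+1)) : bool :=
  [&& [forall i : 'I_(size s).+1, hy s i <= hx s i],
      (hx s (size s) == a), (hy s (size s) == b)
    & [forall i : 'I_(size s),
         if nth None s i is Some d then (d <= hy s i)%N else true]].

Definition rab (a b : nat) : nat :=
  #|[set t : (a + b).-tuple (option 'I_b.+1) | @is_hdpath a b t]|.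

Inductive btree : Type := Leaf | Node (l r : btree).

Fixpoint bsize (t : btree) : nat :=
  match t with Leaf => 0 | Node l r => (bsize l + bsize r).+1 end.

Fixpoint post (t : btree) : seq bool :=
  match t with Leaf => [:: false] | Node l r => post l ++ post r ++ [:: true] end.

Definition leaf_pos (t : btree) : seq nat :=
  [seq i <- iota 0 (size (post t)) | ~~ nth true (post t) i].

Definition leftmost_pos (t : btree) : nat := head 0%N (leaf_pos t).

(* A relaxed tree is a spine t together with the list of pointer targets
   (postorder positions) of the non-left-most leaves, listed in postorder. *)
Definition is_relaxed (n : nat) (x : btree * seq nat) : Prop :=
  let: (t, ptr) := x in
  [/\ bsize t = n,
      size ptr = size (behead (leaf_pos t))
    & all2 (fun q p => (p < q)%N && (nth false (post t) p || (p == leftmost_pos t)))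
           (behead (leaf_pos t)) ptr].

(* Removing the last step of a path gives recurrences.  Put a = (n+m)/2 and b = (n-m)/2:
   the up step ending at (n,m) starts at (n-1,m-1) and has weight (b+1)/a, so a! d_{n,m}
   and r_{a,b} satisfy the same recurrence f(a,b) = (b+1) f(a-1,b) + [b <= a] f(a,b-1),
   the last step of a decorated path being an H step with b+1 decorations or a V step;
   the same induction shows that d_{n,m} vanishes when n and m have different parities.
   A relaxed tree is its spine, coded by the postorder word with leaves as H steps and
   internal nodes as V steps, together with its pointers; a leaf has one target more than
   there are internal nodes before it, so counting pointer assignments word by word gives
   the recurrence again, with a = b = n. *)

From HB Require Import structures.
From mathcomp Require Import all_boot all_order all_algebra.
From mathcomp Require Import zify ring.
From Stdlib Require List.
Import GRing.Theory Num.Theory.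
Set Implicit Arguments.
Unset Strict Implicit.

Section FinTypeBig.
Variables (R : Type) (idx : R) (op : Monoid.com_law idx) (A : finType).

Lemma big_tuple0 (F : seq A -> R) :
  \big[op/idx]_(t : 0.-tuple A) F t = F [::].
Proof. by rewrite (big_pred1 [tuple]) // => t; apply/esym/eqP/tuple0. Qed.

Lemma big_tuple_cons k (F : seq A -> R) :
  \big[op/idx]_(t : k.+1.-tuple A) F t =
  \big[op/idx]_(c : A) \big[op/idx]_(t : k.-tuple A) F (c :: t).
Proof.
rewrite pair_big (reindex (fun p : A * k.-tuple A => [tuple of p.1 :: p.2])) //=.
exists (fun t : k.+1.-tuple A => (thead t, [tuple of behead t])).
  by move=> [c t] _ /=; congr pair; apply: val_inj.
by move=> t _; apply: val_inj; rewrite /= [in RHS](tuple_eta t).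
Qed.

Lemma big_tuple_rcons k (F : seq A -> R) :
  \big[op/idx]_(t : k.+1.-tuple A) F t =
  \big[op/idx]_(t : k.-tuple A) \big[op/idx]_(c : A) F (rcons t c).
Proof.
have rev_inj n : injective (fun t : n.-tuple A => [tuple of rev t]).
  by move=> t1 t2 /(congr1 val) /= e; apply: val_inj; rewrite -[val t1]revK e revK.
rewrite (reindex_inj (rev_inj k.+1)) /= (big_tuple_cons k (fun s => F (rev s))).
rewrite [LHS]exchange_big /= (reindex_inj (rev_inj k)) /=.
by apply: eq_bigr => t _; apply: eq_bigr => c _; rewrite rev_cons revK.
Qed.

Lemma big_option (F : option A -> R) :
  \big[op/idx]_(o : option A) F o = op (F None) (\big[op/idx]_(x : A) F (Some x)).
Proof.
rewrite (bigD1 None) //= (reindex_omap Some id) /=; last by case.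
by under eq_bigl => x do rewrite eqxx.
Qed.

End FinTypeBig.

Lemma forall_ord_recr n (P : nat -> bool) :
  [forall i : 'I_n.+1, P i] = [forall i : 'I_n, P i] && P n.
Proof.
apply/forallP/andP => [P_all|[/forallP P_all P_n] i].
  split; last exact: (P_all ord_max).
  by apply/forallP => i; exact: (P_all (widen_ord (leqnSn n) i)).
have [lt_in|ge_in] := ltnP i n; first exact: (P_all (Ordinal lt_in)).
by have -> : nat_of_ord i = n by apply/eqP; rewrite eqn_leq ge_in -ltnS ltn_ord.
Qed.

Local Open Scope ring_scope.

Lemma mh_rcons s c i : (i <= size s)%N -> mh (rcons s c) i = mh s i.
Proof.
move=> le_is; apply: eq_bigr => j _.
by rewrite nth_rcons (leq_trans (ltn_ord j) le_is).
Qed.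

Lemma mh_rcons_size s c :
  mh (rcons s c) (size s).+1 = mh s (size s) + (if c then 1 else -1).
Proof. by rewrite /mh big_ord_recr /= -/(mh _ _) mh_rcons // nth_rcons ltnn eqxx. Qed.

Lemma meander_rcons s c : is_meander (rcons s c) =
  is_meander s && (0 <= mh s (size s) + (if c then 1 else -1)).
Proof.
rewrite /is_meander size_rcons (forall_ord_recr _ (fun i => 0 <= mh (rcons s c) i)).
rewrite mh_rcons_size; congr andb; apply: eq_forallb => i.
by rewrite mh_rcons // -ltnS.
Qed.

Lemma meander_mh_ge0 s : is_meander s -> 0 <= mh s (size s).
Proof. by move=> /forallP /(_ ord_max). Qed.

Lemma mweight_rcons s c : mweight (rcons s c) =
  mweight s * (if c then up_weight (size s) (mh s (size s)) else 1).
Proof.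
rewrite /mweight size_rcons big_mkcond big_ord_recr /= [in RHS]big_mkcond.
rewrite nth_rcons ltnn eqxx mh_rcons //; congr (_ * _).
by apply: eq_bigr => i _; rewrite nth_rcons ltn_ord mh_rcons // ltnW.
Qed.

(* [dnm] with an integer end height, so that the recurrence can refer to height [z - 1] *)
Definition dz n (z : int) : rat :=
  \sum_(s : n.-tuple bool | is_meander s && (mh s n == z)) mweight s.

Lemma meander_rcons_weight n s (z : int) : size s = n ->
  \sum_(c : bool) (if is_meander (rcons s c) && (mh (rcons s c) n.+1 == z)
                   then mweight (rcons s c) else 0) =
  (if (0 <= z) && is_meander s && (mh s n == z + 1) then mweight s else 0)
  + up_weight n (z - 1) * (if is_meander s && (mh s n == z - 1) then mweight s else 0).
Proof.
move=> <-; rewrite big_bool /= !meander_rcons !mh_rcons_size !mweight_rcons.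
case: (boolP (is_meander s)) => [/meander_mh_ge0|_]; last by rewrite !andbF mulr0 !addr0.
move: (mh s (size s)) => h h_ge0.
have -> : (0 <= h + 1) && (h + 1 == z) = (h == z - 1) by lia.
have -> : (0 <= h - 1) && (h - 1 == z) = (0 <= z) && (h == z + 1) by lia.
have [->|_] := eqVneq h (z - 1); last by rewrite andbT andbF mulr0 add0r addr0 mulr1.
have -> : (z - 1 == z + 1) = false by lia.
by rewrite !andbF add0r addr0 mulrC.
Qed.

Lemma dz_rec n z :
  dz n.+1 z = (if 0 <= z then dz n (z + 1) else 0) + up_weight n (z - 1) * dz n (z - 1).
Proof.
rewrite /dz big_mkcond (big_tuple_rcons _ _ (fun s : seq bool =>
  if is_meander s && (mh s n.+1 == z) then mweight s else 0)) /=.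
under eq_bigr => t _ do rewrite (meander_rcons_weight _ (size_tuple t)).
rewrite big_split /= mulr_sumr; congr (_ + _).
  by case: (0 <= z); [rewrite [RHS]big_mkcond | rewrite big1].
by rewrite [RHS]big_mkcond; apply: eq_bigr => s _; case: ifP; rewrite ?mulr0.
Qed.

Lemma dz_neg n z : z < 0 -> dz n z = 0.
Proof.
move=> z_lt0; rewrite /dz big1 // => s /andP[/meander_mh_ge0 + /eqP mh_z].
by rewrite size_tuple mh_z; lia.
Qed.

Lemma dz0 z : dz 0 z = (z == 0)%:R.
Proof.
rewrite /dz big_mkcond (big_tuple0 _ (fun s : seq bool =>
  if is_meander s && (mh s 0 == z) then mweight s else 0)) /=.
have -> : is_meander [::] by apply/forallP => i; rewrite (ord1 i) /mh big_ord0.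
by rewrite /mh /mweight !big_ord0 eq_sym; case: (z == 0).
Qed.

Lemma dz_eq0 n m : odd (n + m) || (n < m)%N -> dz n m%:Z = 0.
Proof.
elim: n m => [|n IH] m; first by rewrite dz0; case: m.
move=> odd_or_lt; rewrite dz_rec (_ : 0 <= m%:Z) // (_ : m%:Z + 1 = m.+1%:Z); last by lia.
rewrite IH; last by move: odd_or_lt; rewrite addnS -addSn; case: odd => //=; lia.
case: m odd_or_lt => [|m]; first by rewrite dz_neg ?mulr0 ?addr0.
rewrite addSn addnS /= negbK ltnS => odd_or_lt.
by rewrite (_ : m.+1%:Z - 1 = m%:Z) ?IH ?mulr0 ?addr0 //; lia.
Qed.

Close Scope ring_scope.

Definition rstep (f : nat -> nat -> nat) (x y : nat) : nat :=
  (if x is x'.+1 then y.+1 * f x' y else 0) + (if y is y'.+1 then (y <= x) * f x y' else 0).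

(* [rnum (a + b) a b] computes r_{a,b} by its last-step recurrence; the first argument
   counts the steps. *)
Fixpoint rnum (k : nat) : nat -> nat -> nat :=
  if k is k'.+1 then rstep (rnum k') else fun x y => (x == 0) && (y == 0).

Lemma rnum_lt k x y : x < y -> rnum k x y = 0.
Proof.
elim: k x y => [|k IH] [|x] [|y] //=; rewrite ltnS => lt_xy.
have lt_xSy : x < y.+1 by rewrite ltnS ltnW.
by rewrite /rstep IH // ltnS leqNgt lt_xy muln0 mul0n.
Qed.

Lemma rnum_unique B (f : nat -> nat -> nat -> nat) :
    (forall x y, y < B -> f 0 x y = (x == 0) && (y == 0)) ->
    (forall k x y, y < B -> f k.+1 x y = rstep (f k) x y) ->
  forall k x y, y < B -> f k x y = rnum k x y.
Proof.
move=> f0 fS; elim=> [|k IH] x y lt_yB; first exact: f0.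
rewrite fS //=; congr addn; first by case: x => // x; rewrite IH.
by case: y lt_yB => // y lt_yB; rewrite IH // ltnW.
Qed.

Local Open Scope ring_scope.

Lemma up_weight_add_sub n a b :
  (a + b)%N = n -> up_weight n (a%:Z - b%:Z) = b.+1%:R / a.+1%:R.
Proof.
move=> <-; rewrite /up_weight.
rewrite (_ : _ - _ + 2 = (2 * b.+1)%N%:Z); last by lia.
rewrite (_ : _ + _ + 2 = (2 * a.+1)%N%:Z); last by lia.
rewrite -!pmulrn !natrM; field.
by rewrite addrC natr1 pnatr_eq0.
Qed.

Lemma dz_rnum a b : a`!%:R * dz (a + b) (a%:Z - b%:Z) = (rnum (a + b) a b)%:R.
Proof.
move nE : (a + b)%N => n; elim: n a b nE => [|n IH] a b.
  by case: a => [|a]; case: b => [|b] //= _; rewrite dz0 mul1r.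
case: a => [|a] nE; first by rewrite dz_neg ?mulr0 ?rnum_lt //; lia.
rewrite dz_rec /= /rstep natrD addrC mulrDr; congr (_ + _).
  rewrite (_ : _ - 1 = a%:Z - b%:Z); last by lia.
  rewrite (@up_weight_add_sub _ a b); last by lia.
  rewrite natrM -(IH a b) ?factS ?natrM; [field | lia].
  by rewrite addrC natr1 pnatr_eq0.
case: b nE => [|b] nE.
  by rewrite (_ : a.+1%:Z - 0%:Z + 1 = a.+2%:Z) ?dz_eq0 ?mulr0 //; lia.
rewrite (_ : (0 <= _) = (b < a.+1)%N); last by lia.
case: ifP => _; last by rewrite mulr0.
rewrite (_ : _ + 1 = a.+1%:Z - b%:Z); last by lia.
by rewrite IH ?mul1n //; lia.
Qed.

Close Scope ring_scope.

Lemma take_rcons (T : Type) (s : seq T) x i :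
  i <= size s -> take i (rcons s x) = take i s.
Proof. by move=> le_is; rewrite -cats1 takel_cat. Qed.

Lemma sum_ord_leq n y : y < n -> \sum_(d < n) (d <= y) = y.+1.
Proof.
move=> lt_yn; rewrite -(big_mkord xpredT (fun d => (d <= y : nat))).
rewrite (@big_cat_nat _ _ _ y.+1) //=.
rewrite (@eq_big_nat _ _ _ 0 y.+1 _ (fun=> 1)) => [|i /andP[_ lt_iy]]; last by rewrite -ltnS lt_iy.
rewrite (@eq_big_nat _ _ _ y.+1 n _ (fun=> 0)) => [|i /andP[lt_yi _]]; last by rewrite leqNgt lt_yi.
by rewrite big1_eq sum_nat_const_nat muln1 addn0.
Qed.

Section DecoratedPaths.
Variable B : nat.
Implicit Types s : seq (option 'I_B).

Lemma hx_rcons s o i : i <= size s -> hx (rcons s o) i = hx s i.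
Proof. by move=> le_is; rewrite /hx take_rcons. Qed.

Lemma hy_rcons s o i : i <= size s -> hy (rcons s o) i = hy s i.
Proof. by move=> le_is; rewrite /hy take_rcons. Qed.

Lemma hx_rcons_size s o :
  hx (rcons s o) (size s).+1 = hx s (size s) + (if o is Some _ then 1 else 0).
Proof.
by rewrite /hx take_oversize ?size_rcons // take_size -cats1 count_cat /= addn0; case: o.
Qed.

Lemma hy_rcons_size s o :
  hy (rcons s o) (size s).+1 = hy s (size s) + (if o is Some _ then 0 else 1).
Proof.
by rewrite /hy take_oversize ?size_rcons // take_size -cats1 count_cat /= addn0; case: o.
Qed.

Definition below_diagonal s := [forall i : 'I_(size s).+1, hy s i <= hx s i].

Definition decorations_ok s :=
  [forall i : 'I_(size s), if nth None s i is Some d then d <= hy s i else true].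

Definition hdpath x y s :=
  [&& below_diagonal s, hx s (size s) == x, hy s (size s) == y & decorations_ok s].

Lemma below_diagonal_rcons s o : below_diagonal (rcons s o) =
  below_diagonal s && (hy s (size s) + (if o is Some _ then 0 else 1) <=
                       hx s (size s) + (if o is Some _ then 1 else 0)).
Proof.
rewrite /below_diagonal size_rcons.
rewrite (forall_ord_recr _ (fun i => hy (rcons s o) i <= hx (rcons s o) i)).
rewrite hx_rcons_size hy_rcons_size; congr andb; apply: eq_forallb => i.
by rewrite hx_rcons ?hy_rcons // -ltnS.
Qed.

Lemma decorations_ok_rcons s o : decorations_ok (rcons s o) =
  decorations_ok s && (if o is Some d then d <= hy s (size s) else true).
Proof.
rewrite /decorations_ok size_rcons (forall_ord_recr _ (fun i =>
  if nth None (rcons s o) i is Some d then d <= hy (rcons s o) i else true)).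
rewrite nth_rcons ltnn eqxx hy_rcons //; congr andb; apply: eq_forallb => i.
by rewrite nth_rcons ltn_ord hy_rcons // ltnW.
Qed.

Lemma hdpath_rcons_None s x y :
  hdpath x y (rcons s None) = [&& 0 < y, y <= x & hdpath x y.-1 s].
Proof.
rewrite /hdpath below_diagonal_rcons decorations_ok_rcons size_rcons.
rewrite hx_rcons_size hy_rcons_size andbT.
by case: (decorations_ok s); case: (below_diagonal s); rewrite ?andbF //=; lia.
Qed.

Lemma hdpath_rcons_Some s x y d :
  hdpath x y (rcons s (Some d)) = [&& 0 < x, d <= y & hdpath x.-1 y s].
Proof.
rewrite /hdpath below_diagonal_rcons decorations_ok_rcons size_rcons.
rewrite hx_rcons_size hy_rcons_size.
case: (decorations_ok s); rewrite ?andbF //.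
case below: (below_diagonal s); rewrite ?andbF //=.
by move: (forallP below ord_max) => /=; lia.
Qed.

Definition hdcount k x y := \sum_(t : k.-tuple (option 'I_B)) hdpath x y t.

Lemma hdcount0 x y : hdcount 0 x y = (x == 0) && (y == 0).
Proof.
rewrite /hdcount (big_tuple0 _ (fun s => nat_of_bool (hdpath x y s))) /hdpath.
have -> : below_diagonal [::] by apply/forallP.
have -> : decorations_ok [::] by apply/forallP => -[].
by rewrite /hx /hy /= andbT !(eq_sym 0).
Qed.

Lemma sum_hdpath_rcons s x y : y < B ->
  \sum_(o : option 'I_B) hdpath x y (rcons s o) = rstep (fun x' y' => hdpath x' y' s) x y.
Proof.
move=> lt_yB; rewrite big_option /= hdpath_rcons_None addnC /rstep; congr addn.
  under eq_bigr => d _ do rewrite hdpath_rcons_Some.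
  case: x => [|x] /=; first by rewrite big1_eq.
  rewrite -(@sum_ord_leq B y lt_yB) big_distrl; apply: eq_bigr => d _ /=.
  by case: (d <= y); case: hdpath.
by case: y {lt_yB} => [|y] //=; case: (y < x); case: hdpath.
Qed.

Lemma hdcount_rec k x y : y < B -> hdcount k.+1 x y = rstep (hdcount k) x y.
Proof.
move=> lt_yB; rewrite /hdcount (big_tuple_rcons _ _ (fun s => nat_of_bool (hdpath x y s))).
under eq_bigr => t _ do rewrite sum_hdpath_rcons //.
rewrite big_split /rstep; case: x => [|x]; case: y {lt_yB} => [|y];
  by rewrite /= ?big_distrr ?big1_eq.
Qed.

End DecoratedPaths.

Lemma rab_rnum a b : rab a b = rnum (a + b) a b.
Proof.
have -> : rab a b = hdcount b.+1 (a + b) a b.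
  rewrite /rab /hdcount cardsE -sum1_card big_mkcond /=.
  apply: eq_bigr => t _; rewrite unfold_in /hdpath /below_diagonal /decorations_ok.
  by case: [&& _, _, _ & _].
apply: (@rnum_unique b.+1 (hdcount b.+1)) => // [x y _|k x y]; first exact: hdcount0.
exact: hdcount_rec.
Qed.

Definition parse_step (st : option (seq btree)) (c : bool) : option (seq btree) :=
  if st is Some s then
    if c then (if s is r :: l :: rest then Some (Node l r :: rest) else None)
    else Some (Leaf :: s)
  else None.

Definition parse (st : option (seq btree)) (w : seq bool) := foldl parse_step st w.

Lemma parse_post t st w : parse (Some st) (post t ++ w) = parse (Some (t :: st)) w.
Proof. by elim: t st w => [|l IHl r IHr] st w //=; rewrite -!catA IHl IHr. Qed.

Lemma post_inj : injective post.
Proof.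
move=> t1 t2 post_eq; have := parse_post t1 [::] [::].
by rewrite post_eq parse_post => -[].
Qed.

HB.instance Definition _ := Equality.copy btree (inj_type post_inj).

Lemma parse_flatten st0 w st : parse (Some st0) w = Some st ->
  flatten (map post (rev st)) = flatten (map post (rev st0)) ++ w.
Proof.
elim/last_ind: w st => [|w c IH] st; first by case=> ->; rewrite cats0.
rewrite /parse foldl_rcons -/(parse _ _) -cats1 catA.
case: (parse (Some st0) w) IH => [s|//] /(_ s erefl) <-.
case: c => /=; last by case=> <-; rewrite rev_cons map_rcons -cats1 flatten_cat.
case: s => [|r [|l rest]] // [<-].
by rewrite !rev_cons !map_rcons -!cats1 !flatten_cat /= !cats0 -!catA.
Qed.

Lemma parse_size st0 w st : parse (Some st0) w = Some st ->
  size st + count id w = size st0 + count negb w.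
Proof.
elim/last_ind: w st => [|w c IH] st; first by case=> ->.
rewrite /parse foldl_rcons -/(parse _ _) -cats1 !count_cat.
case: (parse (Some st0) w) IH => [s|//] /(_ s erefl).
by case: c => /=; [case: s => [|r [|l rest]] //= + [<-] /= | move=> + [<-] /=]; lia.
Qed.

Lemma post_behead t : post t = false :: behead (post t).
Proof. by elim: t => [|l IHl r _] //=; rewrite IHl. Qed.

Lemma count_post_nodes t : count id (post t) = bsize t.
Proof. by elim: t => [|l IHl r IHr] //=; rewrite !count_cat IHl IHr /=; lia. Qed.

Lemma count_post_leaves t : count negb (post t) = (bsize t).+1.
Proof. by elim: t => [|l IHl r IHr] //=; rewrite !count_cat IHl IHr /=; lia. Qed.

(* A spine [t] is coded by [behead (post t)]: postorder starts with the left-most leaf. *)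
Definition spine_word (u : seq bool) : bool :=
  if parse (Some [:: Leaf]) u is Some [:: _] then true else false.

Definition spine_of (u : seq bool) : btree :=
  if parse (Some [:: Leaf]) u is Some [:: t] then t else Leaf.

Lemma parse_behead_post t : parse (Some [:: Leaf]) (behead (post t)) = Some [:: t].
Proof. by have := parse_post t [::] [::]; rewrite cats0 post_behead. Qed.

Lemma spine_word_post t : spine_word (behead (post t)).
Proof. by rewrite /spine_word parse_behead_post. Qed.

Lemma spine_of_post t : spine_of (behead (post t)) = t.
Proof. by rewrite /spine_of parse_behead_post. Qed.

Lemma post_spine_of u : spine_word u -> post (spine_of u) = false :: u.
Proof.
rewrite /spine_word /spine_of; case parse_u: parse => [[|t [|]]|] // _.
by have := parse_flatten parse_u; rewrite /= !cats0.
Qed.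

Definition valid_word x y (u : seq bool) : bool :=
  [&& parse (Some [:: Leaf]) u != None, count negb u == x & count id u == y].

(* The leaf at position [i] of [u] may point to the left-most leaf or to any of the
   [count id (take i u)] internal nodes before it. *)
Definition pointer_choices (u : seq bool) : nat :=
  \prod_(0 <= i < size u) (if nth true u i then 1 else (count id (take i u)).+1).

Definition word_weight x y u := if valid_word x y u then pointer_choices u else 0.

Lemma pointer_choices_rcons u c :
  pointer_choices (rcons u c) = pointer_choices u * (if c then 1 else (count id u).+1).
Proof.
rewrite /pointer_choices size_rcons big_nat_recr //= nth_rcons ltnn eqxx.
rewrite take_rcons // take_size; congr muln; apply: eq_big_nat => i /andP[_ lt_iu].
by rewrite nth_rcons lt_iu take_rcons // ltnW.
Qed.

Lemma valid_word_rcons u c x y : valid_word x y (rcons u c) =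
  if c then [&& 0 < y, y <= x & valid_word x y.-1 u] else (0 < x) && valid_word x.-1 y u.
Proof.
rewrite /valid_word /parse foldl_rcons -/(parse _ _) -cats1 !count_cat /=.
case parse_u: (parse (Some [:: Leaf]) u) => [s|]; last by case: c; rewrite /= ?andbF.
have /= := parse_size parse_u.
by case: c => /=; [case: s {parse_u} => [|r [|l rest]] /= | ]; lia.
Qed.

Lemma sum_word_weight_rcons u x y :
  \sum_(c : bool) word_weight x y (rcons u c) = rstep (fun x' y' => word_weight x' y' u) x y.
Proof.
rewrite big_bool /= /word_weight !valid_word_rcons !pointer_choices_rcons addnC /rstep.
case: x => [|x]; case: y => [|y] /=; rewrite ?muln0 ?muln1 ?add0n ?addn0 //.
- case valid: (valid_word x 0 u) => //.
  by have /and3P[_ _ /eqP ->] := valid; rewrite mul1n muln1.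
- congr addn; last by case: (y < x.+1); case: valid_word; rewrite ?mul1n.
  case valid: (valid_word x y.+1 u); rewrite ?muln0 //.
  by have /and3P[_ _ /eqP ->] := valid; rewrite mulnC.
Qed.

Definition weighted_words k x y := \sum_(u : k.-tuple bool) word_weight x y u.

Lemma weighted_words_rnum k x y : weighted_words k x y = rnum k x y.
Proof.
apply: (@rnum_unique y.+1 weighted_words) => // [{}x {}y _|{}k {}x {}y _].
  rewrite /weighted_words big_tuple0 /word_weight /valid_word /=.
  by rewrite /pointer_choices big_mkord big_ord0 !(eq_sym 0); case: (x == 0); case: (y == 0).
rewrite /weighted_words big_tuple_rcons.
under eq_bigr => t _ do rewrite sum_word_weight_rcons.
rewrite /rstep big_split; case: x => [|x]; case: y => [|y];
  by rewrite /= ?big_distrr ?big1_eq.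
Qed.

Fixpoint cart (T : Type) (L : seq (seq T)) : seq (seq T) :=
  if L is l :: L' then [seq p :: r | p <- l, r <- cart L'] else [:: [::]].

Lemma mem_cart (T : eqType) (L : seq (seq T)) r :
  (r \in cart L) = all2 (fun l p => p \in l) L r.
Proof.
elim: L r => [|l L IH] [|p r] //=.
  by apply/negP => /allpairsP[[? ?] []].
apply/allpairsP/andP => [[[a b] [la bL /= [-> ->]]]|[pl rL]]; first by rewrite -IH.
by exists (p, r); rewrite /= pl IH.
Qed.

Lemma uniq_cart (T : eqType) (L : seq (seq T)) : all uniq L -> uniq (cart L).
Proof.
elim: L => [|l L IH] //= /andP[ul uL].
apply: allpairs_uniq => //; first exact: IH.
by move=> [a b] [c d] _ _ /= [-> ->].
Qed.

Lemma size_cart (T : Type) (L : seq (seq T)) : size (cart L) = \prod_(l <- L) size l.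
Proof. by elim: L => [|l L IH]; rewrite ?big_nil ?big_cons //= size_allpairs IH. Qed.

Lemma count_nth_iota u i : count (nth false u) (iota 0 i) = count id (take i u).
Proof.
elim: i => [|i IH]; first by rewrite take0.
rewrite -addn1 iotaD count_cat IH /= add0n addn0 addn1.
have [lt_iu|le_ui] := ltnP i (size u).
  by rewrite (take_nth false lt_iu) -cats1 count_cat /= addn0.
by rewrite nth_default // !take_oversize ?addn0 // ltnW.
Qed.

Definition targets t q :=
  [seq p <- iota 0 q | nth false (post t) p || (p == leftmost_pos t)].

Definition pointer_lists t := cart (map (targets t) (behead (leaf_pos t))).

Lemma leftmost_pos0 t : leftmost_pos t = 0.
Proof. by rewrite /leftmost_pos /leaf_pos post_behead. Qed.

Lemma mem_targets t q p :
  (p \in targets t q) = (p < q) && (nth false (post t) p || (p == leftmost_pos t)).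
Proof. by rewrite mem_filter mem_iota andbC. Qed.

Lemma mem_pointer_lists t ptr :
  (ptr \in pointer_lists t) =
  all2 (fun q p => (p < q) && (nth false (post t) p || (p == leftmost_pos t)))
       (behead (leaf_pos t)) ptr.
Proof.
rewrite mem_cart; elim: (behead _) ptr => [|q qs IH] [|p ptr] //=.
by rewrite IH mem_targets.
Qed.

Lemma size_pointer_lists u :
  spine_word u -> size (pointer_lists (spine_of u)) = pointer_choices u.
Proof.
move=> /post_spine_of post_u; rewrite /pointer_lists size_cart big_map.
rewrite /leaf_pos post_u /= -(addn0 1) iotaDl filter_map big_map big_filter.
rewrite /pointer_choices big_mkcond /index_iota subn0; apply: eq_bigr => i _.
rewrite size_filter leftmost_pos0 post_u /= !add1n /= -(addn0 1) iotaDl count_map.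
rewrite (eq_count (a2 := nth false u)) => [|p /=]; last by rewrite orbF.
by rewrite count_nth_iota; case: (nth true u i).
Qed.

Lemma spine_word_valid n u : size u = 2 * n -> spine_word u = valid_word n n u.
Proof.
move=> size_u; rewrite /spine_word /valid_word.
have count_u : count id u + count negb u = size u := count_predC id u.
case parse_u: (parse (Some [:: Leaf]) u) => [st|] //=.
by have /= := parse_size parse_u; case: st {parse_u} => [|r [|l rest]] /=; lia.
Qed.

Definition spine_words n : seq (seq bool) :=
  [seq u <- [seq tval t | t <- enum {: (2 * n).-tuple bool}] | spine_word u].

Lemma mem_spine_words n u : (u \in spine_words n) = (size u == 2 * n) && spine_word u.
Proof.
rewrite mem_filter andbC; congr andb.
apply/mapP/eqP => [[t _ ->]|size_u]; first by rewrite size_tuple.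
by exists (Tuple (introT eqP size_u)); rewrite ?mem_enum.
Qed.

Lemma uniq_spine_words n : uniq (spine_words n).
Proof. by apply: filter_uniq; rewrite map_inj_uniq ?enum_uniq //; exact: val_inj. Qed.

Definition relaxed_trees n : seq (btree * seq nat) :=
  [seq (spine_of u, ptr) | u <- spine_words n, ptr <- pointer_lists (spine_of u)].

Lemma size_relaxed_trees n : size (relaxed_trees n) = rnum (2 * n) n n.
Proof.
rewrite size_allpairs_dep sumnE big_map.
rewrite (eq_big_seq pointer_choices) => [|u]; last first.
  by rewrite mem_spine_words => /andP[_ /size_pointer_lists].
rewrite -weighted_words_rnum /weighted_words /spine_words big_filter big_map big_mkcond.
rewrite big_enum /=; apply: eq_bigr => t _.
by rewrite /word_weight (@spine_word_valid n t) ?size_tuple.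
Qed.

Lemma uniq_relaxed_trees n : uniq (relaxed_trees n).
Proof.
apply: allpairs_uniq_dep => [|u _|[u1 p1] [u2 p2]]; first exact: uniq_spine_words.
  apply: uniq_cart; apply/allP => _ /mapP[q _ ->].
  exact: filter_uniq (iota_uniq 0 q).
move=> /allpairsPdep[v1 [q1 [+ _ [-> _]]]] /allpairsPdep[v2 [q2 [+ _ [-> _]]]].
rewrite !mem_spine_words => /andP[_ /post_spine_of post_u1] /andP[_ /post_spine_of post_u2].
by move=> /= [/(congr1 post)]; rewrite post_u1 post_u2 => -[-> ->].
Qed.

Lemma size_behead_post t : size (behead (post t)) = 2 * bsize t.
Proof.
have count_t : count id (post t) + count negb (post t) = size (post t) := count_predC id _.
by rewrite size_behead -count_t count_post_nodes count_post_leaves; lia.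
Qed.

Lemma mem_relaxed_trees n x : x \in relaxed_trees n <-> is_relaxed n x.
Proof.
split.
  move=> /allpairsPdep[u [ptr [+ + ->]]]; rewrite mem_spine_words mem_pointer_lists.
  move=> /andP[/eqP size_u spine_u] ptr_ok; split => //.
    have := count_post_nodes (spine_of u); rewrite post_spine_of //= add0n => <-.
    by move: spine_u; rewrite (spine_word_valid size_u) => /and3P[_ _ /eqP].
  by move: ptr_ok; rewrite all2E => /andP[/eqP].
case: x => t ptr [size_t _ ptr_ok]; apply/allpairsPdep.
exists (behead (post t)), ptr; rewrite spine_of_post mem_pointer_lists mem_spine_words.
by rewrite size_behead_post size_t eqxx spine_word_post.
Qed.

Lemma In_mem (T : eqType) (x : T) s : List.In x s <-> x \in s.
Proof.
elim: s => [|y s IH] //=; rewrite inE; split.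
  by case=> [->|/IH ->]; rewrite ?eqxx ?orbT.
by case/orP=> [/eqP ->|/IH]; [left|right].
Qed.

Lemma uniq_NoDup (T : eqType) (s : seq T) : uniq s -> List.NoDup s.
Proof.
elim: s => [|x s IH] /=; first by constructor.
by case/andP => /negP x_notin_s /IH; constructor => // /In_mem.
Qed.

Lemma half_add_sub n m : m <= n -> ~~ odd (n + m) ->
  (n + m)./2 + (n - m)./2 = n /\ (n + m)./2 - (n - m)./2 = m.
Proof.
move=> le_mn even_nm; have := odd_double_half (n + m); have := odd_double_half (n - m).
rewrite oddB // -oddD (negbTE even_nm) -!muln2; lia.
Qed.

Local Open Scope ring_scope.

Lemma dz_rab a b : dz (a + b) (a%:Z - b%:Z) = (a`!%:R)^-1 * (rab a b)%:R.
Proof.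
by rewrite rab_rnum -dz_rnum mulrA mulVf ?mul1r // pnatr_eq0 -lt0n fact_gt0.
Qed.

Theorem corollary3p3 :
  (forall n m : nat, (m <= n)%N -> ~~ odd (n + m) ->
     dnm n m = ((((n + m)./2)`!%:R)^-1 * (rab ((n + m)./2) ((n - m)./2))%:R)%R :> rat)
  /\ (forall n m : nat, odd (n + m) -> dnm n m = 0%R :> rat)
  /\ (forall n : nat, exists s : list (btree * seq nat),
        List.NoDup s /\ (forall x, List.In x s <-> is_relaxed n x) /\
        ((List.length s)%:R = (n`!)%:R * dnm (2 * n) 0 :> rat)%R).
Proof.
split; [|split].
- move=> n m le_mn even_nm; rewrite -dz_rab.
  have [add_ab sub_ab] := half_add_sub le_mn even_nm.
  by rewrite -[in dnm n m]add_ab /dnm -/(dz _ _); congr dz; lia.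
- by move=> n m odd_nm; apply: dz_eq0; rewrite odd_nm.
move=> n; exists (relaxed_trees n); split; first exact/uniq_NoDup/uniq_relaxed_trees.
split=> [x|]; first by rewrite In_mem mem_relaxed_trees.
by rewrite [List.length _]size_relaxed_trees mul2n -addnn -dz_rnum subrr.
Qed.
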